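(* Let $n\ge 2$, $p\ge 1$, $B\ge 1$ and $\theta\in[0,1]$, and consider the Complementary Pairs Stability Selection set $\hat S^{\mathrm{CPSS}}_{n,\tau}$, the sets $L_\theta$, $H_\theta$ and the procedures $\hat S_{\lfloor n/2\rfloor}$ described in the context. Then: (i) If $\tau\in(\tfrac12,1]$, then \[\mathbb{E}|\hat S^{\mathrm{CPSS}}_{n,\tau}\cap L_\theta|\le \frac{\theta}{2\tau-1}\,\mathbb{E}|\hat S_{\lfloor n/2\rfloor}\cap L_\theta|.\] (ii) Let $\hat N^{\mathrm{CPSS}}_{n,\tau}=\{1,\dots,p\}\setminus \hat S^{\mathrm{CPSS}}_{n,\tau}$ and $\hat N_{m}=\{1,\dots,p\}\setminus \hat S_{m}$. If $\tau\in[0,\tfrac12)$, then \[\mathbb{E}|\hat N^{\mathrm{CPSS}}_{n,\tau}\cap H_\theta|\le \frac{1-\theta}{1-2\tau}\,\mathbb{E}|\hat N_{\lfloor n/2\rfloor}\cap H_\theta|.\]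
   Context: Let $Z_1,\dots,Z_n$ be independent and identically distributed random elements. A variable selection procedure is a family of statistics $\hat S_m=\hat S_m(Z_1,\dots,Z_m)$, $m\ge1$, each taking values in the set of subsets of $\{1,\dots,p\}$. For $A=\{i_1<\dots<i_{|A|}\}\subseteq\{1,\dots,n\}$ write $\hat S(A):=\hat S_{|A|}(Z_{i_1},\dots,Z_{i_{|A|}})$. The selection probability of $k\in\{1,\dots,p\}$ is $p_{k,m}:=\mathbb{P}(k\in\hat S_m)$, where $\hat S_m=\hat S_m(Z_1,\dots,Z_m)$. Let $\{(A_{2j-1},A_{2j}):j=1,\dots,B\}$ be randomly chosen pairs of subsets of $\{1,\dots,n\}$, each subset of size $\lfloor n/2\rfloor$, with $A_{2j-1}\cap A_{2j}=\emptyset$, the pairs being independent of each other and of the data. Define $\hat\Pi_B(k):=\frac{1}{2B}\sum_{j=1}^{2B}\mathbb{1}_{\{k\in\hat S(A_j)\}}$ and, for $\tau\in[0,1]$, $\hat S^{\mathrm{CPSS}}_{n,\tau}:=\{k:\hat\Pi_B(k)\ge\tau\}$. For $\theta\in[0,1]$ let $L_\theta=\{k:p_{k,\lfloor n/2\rfloor}\le\theta\}$ and $H_\theta=\{k:p_{k,\lfloor n/2\rfloor}>\theta\}$. *)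

From HB Require Import structures.
From mathcomp Require Import all_boot all_order all_algebra.
From mathcomp Require Import all_classical all_reals all_analysis.
Set Implicit Arguments. Unset Strict Implicit. Unset Printing Implicit Defensive.
Import Order.TTheory GRing.Theory Num.Theory.
Local Open Scope classical_set_scope.
Local Open Scope ring_scope.

Lemma half_leq_self (n : nat) : (n./2 <= n)%N.
Proof. by rewrite -{2}(odd_double_half n) -addnn addnA leq_addl. Qed.

Definition cylinders {d} (X : measurableType d) (m : nat) : set (set ('I_m -> X)) :=
  [set C | exists (i : 'I_m) (E : set X), measurable E /\ C = (fun x => x i) @^-1` E].

Definition measurable_selection {d} (X : measurableType d) (p : nat)
    (S : forall m : nat, ('I_m -> X) -> {set 'I_p}) : Prop :=
  forall (m : nat) (k : 'I_p), <<s @cylinders _ X m >> [set x | k \in S m x].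

(* \hat S(A) for A = {i_1 < ... < i_|A|} : enum_val enumerates A increasingly. *)
Definition sel_sub {d} {T : Type} (X : measurableType d) (p n : nat)
    (S : forall m : nat, ('I_m -> X) -> {set 'I_p}) (Z : 'I_n -> T -> X)
    (A : {set 'I_n}) (w : T) : {set 'I_p} :=
  S #|A| (fun i => Z (@enum_val _ (mem A) i) w).

Definition sel_half {d} {T : Type} (X : measurableType d) (p n : nat)
    (S : forall m : nat, ('I_m -> X) -> {set 'I_p}) (Z : 'I_n -> T -> X)
    (w : T) : {set 'I_p} :=
  S n./2 (fun i => Z (widen_ord (half_leq_self n) i) w).

Definition Pi_hat {d} {T : Type} (R : realType) (X : measurableType d) (p n B : nat)
    (S : forall m : nat, ('I_m -> X) -> {set 'I_p}) (Z : 'I_n -> T -> X)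
    (A : 'I_B -> T -> {set 'I_n} * {set 'I_n}) (k : 'I_p) (w : T) : R :=
  (2 * B)%:R^-1 * \sum_(j < B)
     (((k \in sel_sub S Z (A j w).1 w) : nat)%:R
      + ((k \in sel_sub S Z (A j w).2 w) : nat)%:R).

Definition S_CPSS {d} {T : Type} (R : realType) (X : measurableType d) (p n B : nat)
    (S : forall m : nat, ('I_m -> X) -> {set 'I_p}) (Z : 'I_n -> T -> X)
    (A : 'I_B -> T -> {set 'I_n} * {set 'I_n}) (tau : R) (w : T) : {set 'I_p} :=
  [set k | tau <= Pi_hat R S Z A k w].

Definition sel_prob {d d'} {T : measurableType d'} (R : realType)
    (X : measurableType d) (p n : nat) (P : probability T R)
    (S : forall m : nat, ('I_m -> X) -> {set 'I_p}) (Z : 'I_n -> T -> X)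
    (k : 'I_p) : \bar R :=
  P [set w | k \in sel_half S Z w].

Definition L_set {d d'} {T : measurableType d'} (R : realType)
    (X : measurableType d) (p n : nat) (P : probability T R)
    (S : forall m : nat, ('I_m -> X) -> {set 'I_p}) (Z : 'I_n -> T -> X)
    (theta : R) : {set 'I_p} :=
  [set k | (sel_prob P S Z k <= theta%:E)%E].

Definition H_set {d d'} {T : measurableType d'} (R : realType)
    (X : measurableType d) (p n : nat) (P : probability T R)
    (S : forall m : nat, ('I_m -> X) -> {set 'I_p}) (Z : 'I_n -> T -> X)
    (theta : R) : {set 'I_p} :=
  [set k | (theta%:E < sel_prob P S Z k)%E].

(* Z_1..Z_n i.i.d., the B random pairs independent of each other and of the
   data: the family (Z_1,...,Z_n, pair_1, ..., pair_B) is mutually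
   independent and the Z_i are identically distributed. *)
Definition iid_and_indep {d d'} {T : measurableType d'} (R : realType)
    (X : measurableType d) (n B : nat) (P : probability T R)
    (Z : 'I_n -> T -> X) (A : 'I_B -> T -> {set 'I_n} * {set 'I_n}) : Prop :=
  (forall i, measurable_fun setT (Z i)) /\
  (forall j a, measurable (A j @^-1` [set a])) /\
  (forall i i' (E : set X), measurable E ->
      P (Z i @^-1` E) = P (Z i' @^-1` E)) /\
  (forall (E : 'I_n -> set X) (F : 'I_B -> set ({set 'I_n} * {set 'I_n})),
      (forall i, measurable (E i)) ->
      P ((\bigcap_i (Z i @^-1` E i)) `&` (\bigcap_j (A j @^-1` F j)))
      = ((\prod_(i < n) P (Z i @^-1` E i)) * (\prod_(j < B) P (A j @^-1` F j)))%E).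

Local Close Scope classical_set_scope.
Definition valid_pairs {T : Type} (n B : nat)
    (A : 'I_B -> T -> {set 'I_n} * {set 'I_n}) : Prop :=
  forall j w, #|(A j w).1| = n./2 /\ #|(A j w).2| = n./2 /\
              [disjoint (A j w).1 & (A j w).2].

From HB Require Import structures.
From mathcomp Require Import all_boot all_order all_algebra.
From mathcomp Require Import all_classical all_reals all_analysis measurable_realfun.
From mathcomp Require Import ring lra.
Import Order.TTheory GRing.Theory Num.Theory.
Local Open Scope classical_set_scope.
Local Open Scope ring_scope.

(* For bits x, y we have x + y <= 1 + x y, so
   if the average vote of the 2B halves for k is at least tau > 1/2, then at
   least (2 tau - 1) B of the B complementary pairs select k on both halves;
   hence 1_{k in S^CPSS} <= ((2 tau - 1) B)^-1 sum_j 1_{k in S(A_2j-1) and S(A_2j)}.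
   The two halves of a pair are disjoint subsamples of size floor(n/2),
   independent of the (random) choice of the pair, so k is selected on both
   with probability p_k^2 <= theta p_k for k in L_theta; taking expectations
   gives (i).  Part (ii) is the same argument for the complementary procedure
   k \notin S, with tau, theta and p_k replaced by 1 - tau, 1 - theta and
   1 - p_k.  The product formula P(both) = p_k^2 is first checked on
   measurable boxes of the two subsamples and then extended to the product
   sigma-algebra by the uniqueness of measures agreeing on a pi-system. *)

Lemma natr_card_setI (R : pzSemiRingType) p (F L : {set 'I_p}) :
  (#|F :&: L|%:R : R) = \sum_(k in L) ((k \in F) : nat)%:R.
Proof.
rewrite -sum1_card natr_sum [LHS]big_mkcond [RHS]big_mkcond /=.
by apply: eq_bigr => k _; rewrite inE; case: (k \in F); case: (k \in L).
Qed.

Lemma pairs_selected_twice_ge (R : realFieldType) (B : nat)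
    (x y : 'I_B -> bool) (t : R) : (0 < B)%N ->
  t <= (2 * B)%:R^-1 * \sum_(j < B) ((x j : nat)%:R + (y j : nat)%:R) ->
  (2 * t - 1) * B%:R <= \sum_(j < B) ((x j && y j : bool) : nat)%:R.
Proof.
move=> B0 ht; set both := \sum_(j < B) _.
have votes_le : \sum_(j < B) ((x j : nat)%:R + (y j : nat)%:R) <= B%:R + both :> R.
  have -> : B%:R = \sum_(j < B) 1 :> R by rewrite sumr_const card_ord.
  rewrite /both -big_split /=.
  by apply: ler_sum => j _; case: (x j); case: (y j) => /=; lra.
have B2 : 0 < (2 * B)%:R :> R by rewrite ltr0n muln_gt0.
have : t <= (B%:R + both) / (2 * B)%:R.
  rewrite mulrC; apply: (le_trans ht); apply: ler_wpM2l votes_le.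
  by rewrite invr_ge0 ltW.
by rewrite ler_pdivlMr // natrM => ?; lra.
Qed.

Lemma mean_votes_negb (R : realFieldType) (B : nat) (x y : 'I_B -> bool) : (0 < B)%N ->
  (2 * B)%:R^-1 * \sum_(j < B) ((~~ x j : nat)%:R + (~~ y j : nat)%:R) =
  1 - (2 * B)%:R^-1 * \sum_(j < B) ((x j : nat)%:R + (y j : nat)%:R) :> R.
Proof.
move=> B0; have B2 : (2 * B)%:R != 0 :> R by rewrite pnatr_eq0 -lt0n muln_gt0.
have sum2 : \sum_(j < B) (2 : R) = (2 * B)%:R by rewrite sumr_const card_ord natrM mulr_natr.
have -> : \sum_(j < B) ((~~ x j : nat)%:R + (~~ y j : nat)%:R) =
    (2 * B)%:R - \sum_(j < B) ((x j : nat)%:R + (y j : nat)%:R) :> R.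
  rewrite -sum2 -sumrB; apply: eq_bigr => j _.
  by case: (x j); case: (y j) => /=; rewrite ?(mulr1n, mulr0n); lra.
by rewrite mulrBr mulVf.
Qed.

Section nonneg_integrals.
Context {d} {T : measurableType d} {R : realType} (mu : {measure set T -> \bar R}).

(* Unlike [ge0_le_integral], no measurability is needed: the integral of a
   nonnegative function is a supremum over the simple functions below it. *)
Lemma ge0_le_integral_nonmeasurable (f g : T -> \bar R) :
  (forall x, (0 <= f x)%E) -> (forall x, (f x <= g x)%E) ->
  (\int[mu]_x f x <= \int[mu]_x g x)%E.
Proof.
move=> f0 fg.
have g0 x : (0 <= g x)%E by exact: le_trans (f0 x) (fg x).
have ge0_funeneg (h : T -> \bar R) : (forall x, 0 <= h x)%E -> (h^\- = cst 0)%E.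
  move=> h0; apply/funext => x /=; rewrite funenegE.
  by apply/max_idPr; rewrite leeNl oppe0 h0.
have ge0_funepos (h : T -> \bar R) : (forall x, 0 <= h x)%E -> (h^\+ = h)%E.
  by move=> h0; apply/funext => x /=; rewrite funeposE; apply/max_idPl.
rewrite /integral !patch_setT.
rewrite (ge0_funeneg _ f0) (ge0_funeneg _ g0) (ge0_funepos _ f0) (ge0_funepos _ g0).
apply: leeB => //; apply: ereal_sup_le => _ [h hf <-].
by exists h => //= x; exact: le_trans (hf x) (fg x).
Qed.

Lemma integral_sum_indic (I : finType) (Q : pred I) (c : I -> R) (D : I -> set T) :
  (forall i, 0 <= c i) -> (forall i, measurable (D i)) ->
  (\int[mu]_w (\sum_(i | Q i) c i * \1_(D i) w)%:E = \sum_(i | Q i) (c i)%:E * mu (D i))%E.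
Proof.
move=> c0 mD.
under eq_integral => w _ do rewrite -sumEFin -big_filter.
rewrite ge0_integral_sum //.
- rewrite big_filter; apply: eq_bigr => i _.
  under eq_integral => w _ do rewrite EFinM.
  rewrite ge0_integralZl_EFin //; first by rewrite integral_indic // setIT.
  exact/measurable_EFinP/measurable_indic.
- by move=> i; apply/measurable_EFinP/measurable_funM.
- by move=> i w _; rewrite lee_fin mulr_ge0 // indicE; case: (_ \in _).
Qed.

Lemma indic_mem_set (b : T -> bool) w : \1_[set w | b w] w = (b w : nat)%:R :> R.
Proof.
rewrite indicE; case: (boolP (b w)) => bw; first by rewrite mem_set.
by rewrite memNset //; apply/negP.
Qed.

Lemma integral_card_setI p (F : T -> {set 'I_p}) (L : {set 'I_p}) :
  (forall k, measurable [set w | k \in F w]) ->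
  (\int[mu]_w (#|F w :&: L|%:R)%:E = \sum_(k in L) mu [set w | k \in F w])%E.
Proof.
move=> mF; transitivity
    (\int[mu]_w (\sum_(k in L) 1 * \1_([set w | k \in F w]) w)%:E)%E.
  apply: eq_integral => w _; rewrite natr_card_setI.
  by congr (_%:E); apply: eq_bigr => k _; rewrite mul1r indic_mem_set.
by rewrite integral_sum_indic //; apply: eq_bigr => k _; rewrite mul1e.
Qed.

(* [x j k w] and [y j k w] are the votes for [k] of the two halves of the
   [j]-th pair; part (ii) is the instance where a vote means "not selected". *)
Lemma expectation_pair_vote_bound p B (L : {set 'I_p}) (Sel Half : T -> {set 'I_p})
    (x y : 'I_B -> 'I_p -> T -> bool) (r : 'I_p -> R) (t th : R) :
  (0 < B)%N -> 1/2 < t ->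
  (forall k w, k \in Sel w ->
     t <= (2 * B)%:R^-1 * \sum_(j < B) ((x j k w : nat)%:R + (y j k w : nat)%:R)) ->
  (forall j k, measurable [set w | x j k w && y j k w]) ->
  (forall j k, mu [set w | x j k w && y j k w] = (r k ^+ 2)%:E) ->
  (forall k, measurable [set w | k \in Half w]) ->
  (forall k, mu [set w | k \in Half w] = (r k)%:E) ->
  (forall k, k \in L -> 0 <= r k <= th) ->
  (\int[mu]_w (#|Sel w :&: L|%:R)%:E
    <= (th / (2 * t - 1))%:E * \int[mu]_w (#|Half w :&: L|%:R)%:E)%E.
Proof.
move=> B0 t2 hSel mxy mu_xy mHalf mu_Half hr.
have t20 : 0 < 2 * t - 1 by lra.
have B0' : 0 < B%:R :> R by rewrite ltr0n.
pose c := ((2 * t - 1) * B%:R)^-1.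
have c0 : 0 < c by rewrite invr_gt0 mulr_gt0.
pose D (kj : 'I_p * 'I_B) := [set w | x kj.2 kj.1 w && y kj.2 kj.1 w].
have Sel_le : (\int[mu]_w (#|Sel w :&: L|%:R)%:E <=
    \int[mu]_w (\sum_(kj | (kj.1 \in L) && true) c * \1_(D kj) w)%:E)%E.
  apply: ge0_le_integral_nonmeasurable => w; first by rewrite lee_fin ler0n.
  rewrite lee_fin natr_card_setI.
  rewrite -(pair_big (fun k => k \in L) xpredT (fun k j => c * \1_(D (k, j)) w)) /=.
  apply: ler_sum => k _; rewrite -mulr_sumr.
  under eq_bigr => j _ do rewrite indic_mem_set.
  have [/hSel/pairs_selected_twice_ge kSel|_] := boolP (k \in Sel w).
    by rewrite /c ler_pdivlMl ?mulr_gt0 //= mulr1 kSel.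
  by rewrite mulr_ge0 ?sumr_ge0 // ltW.
apply: (le_trans Sel_le); rewrite integral_sum_indic; last 2 first.
- by move=> kj; exact: ltW.
- by move=> kj; exact: mxy.
rewrite integral_card_setI //.
under eq_bigr => kj _ do rewrite mu_xy -EFinM.
under [X in (_ * X)%E]eq_bigr => k _ do rewrite mu_Half.
rewrite !sumEFin -EFinM lee_fin.
rewrite -(pair_big (fun k => k \in L) xpredT (fun k j => c * r k ^+ 2)) /= mulr_sumr.
apply: ler_sum => k kL; have /andP[r0 rth] := hr k kL.
have -> : \sum_(j < B) c * r k ^+ 2 = (2 * t - 1)^-1 * (r k * r k).
  rewrite sumr_const card_ord -mulr_natr /c expr2.
  by field; rewrite !gt_eqF.
rewrite [th / _]mulrC -mulrA; apply: ler_wpM2l; first by rewrite invr_ge0 ltW.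
exact: ler_wpM2r.
Qed.

End nonneg_integrals.

Section sigma_extension.
Context d (T : measurableType d) (R : realType) (P : probability T R).
Context (U : pointedType) (G : set (set U)).
Local Notation UG := (g_sigma_algebraType G).
Variables (f f0 : T -> UG) (E : set T) (c : \bar R).
Hypotheses (mf : measurable_fun setT f) (mf0 : measurable_fun setT f0).
Hypotheses (mE : measurable E) (setIG : setI_closed G) (GT : G setT).
Hypotheses (c_ge0 : (0 <= c)%E) (c_fin : c \is a fin_num).
Hypothesis f_f0 : forall C, G C -> P (f @^-1` C `&` E) = (c * P (f0 @^-1` C))%E.

Lemma preimage_setI_scale_sigma C :
  <<s G>> C -> P (f @^-1` C `&` E) = (c * P (f0 @^-1` C))%E.
Proof.
move=> sC; have c0 : (0 <= fine c)%R by exact: fine_ge0.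
have [m1 m1E] : {m1 : {measure set UG -> \bar R} | forall C, m1 C = P (f @^-1` C `&` E)}.
  by unshelve eexists (pushforward (mrestr P mE) f).
have [m2 m2E] : {m2 : {measure set UG -> \bar R} | forall C, m2 C = (c * P (f0 @^-1` C))%E}.
  by rewrite -[c]fineK //; unshelve eexists (mscale (NngNum c0) (pushforward P f0)).
rewrite -m1E -m2E.
apply: (@measure_unique _ R UG G (fun=> setT) erefl setIG (fun=> GT)) => //.
- by rewrite bigcup_const.
- by move=> C' GC'; rewrite m1E m2E f_f0.
- move=> _; rewrite m1E preimage_setT setTI.
  by rewrite (le_lt_trans (probability_le1 _ mE)) // ltry.
Qed.

End sigma_extension.
Arguments preimage_setI_scale_sigma {d T R P U G f f0 E c}.

Section boxes.
Context d (X : measurableType d) (m : nat).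

Definition box (E : 'I_m -> set X) : set ('I_m -> X) := [set x | forall i, E i (x i)].

Definition measurable_boxes : set (set ('I_m -> X)) :=
  [set C | exists E, (forall i, measurable (E i)) /\ C = box E].

Lemma setI_closed_boxes : setI_closed measurable_boxes.
Proof.
move=> _ _ [E1 [mE1 ->]] [E2 [mE2 ->]]; exists (fun i => E1 i `&` E2 i); split.
  by move=> i; exact: measurableI.
apply/seteqP; split => x; rewrite /box /=.
  by move=> [h1 h2] i; split.
by move=> h; split => i; case: (h i).
Qed.

Lemma measurable_boxes_setT : measurable_boxes setT.
Proof. by exists (fun=> setT); split => //; apply/seteqP; split. Qed.

Lemma cylinders_sub_boxes : <<s @cylinders _ X m>> `<=` <<s measurable_boxes>>.
Proof.
apply: smallest_sub; first exact: smallest_sigma_algebra.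
move=> _ [i [E [mE ->]]]; apply: sub_sigma_algebra.
exists (fun k => if k == i then E else setT); split.
  by move=> k; case: ifP.
apply/seteqP; split => x; rewrite /box /=.
  by move=> Ex k; case: ifP => [/eqP->|].
by move=> /(_ i); rewrite eqxx.
Qed.

End boxes.
Arguments box {d X m} E.

Section complementary_pairs.
Context (R : realType) (d d' : measure_display) (T : measurableType d')
  (X : measurableType d) (P : probability T R) (n B : nat) (Z : 'I_n -> T -> X)
  (A : 'I_B -> T -> {set 'I_n} * {set 'I_n}).
Hypothesis mZ : forall i, measurable_fun setT (Z i).
Hypothesis mA : forall j a, measurable (A j @^-1` [set a]).
Hypothesis Z_ident : forall i i' (E : set X), measurable E ->
  P (Z i @^-1` E) = P (Z i' @^-1` E).
Hypothesis ZA_indep : forall (E : 'I_n -> set X) (F : 'I_B -> set ({set 'I_n} * {set 'I_n})),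
  (forall i, measurable (E i)) ->
  P ((\bigcap_i (Z i @^-1` E i)) `&` (\bigcap_j (A j @^-1` F j)))
  = ((\prod_(i < n) P (Z i @^-1` E i)) * (\prod_(j < B) P (A j @^-1` F j)))%E.
Hypothesis n0 : (0 < n)%N.

Lemma measurable_pair_preimage j F : measurable (A j @^-1` F).
Proof.
rewrite (_ : _ @^-1` _ = \bigcup_(a in F) A j @^-1` [set a]).
  apply: fin_bigcup_measurable; first exact: finite_finset.
  by move=> a _; exact: mA.
by apply/seteqP; split => w /=; [move=> h; exists (A j w) | move=> [a Fa /= ->]].
Qed.

Lemma prob_data E : (forall i, measurable (E i)) ->
  P (\bigcap_i (Z i @^-1` E i)) = (\prod_(i < n) P (Z i @^-1` E i))%E.
Proof.
move=> mE; have := ZA_indep E (fun=> setT) mE.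
rewrite (_ : \bigcap_(j : 'I_B) _ = setT); last by apply/seteqP; split.
rewrite setIT => ->; rewrite [X in (_ * X)%E]big1 ?mule1 // => j _.
by rewrite preimage_setT probability_setT.
Qed.

Lemma prob_data_pair E F j : (forall i, measurable (E i)) ->
  P (\bigcap_i (Z i @^-1` E i) `&` A j @^-1` F) =
  ((\prod_(i < n) P (Z i @^-1` E i)) * P (A j @^-1` F))%E.
Proof.
move=> mE; have := ZA_indep E (fun j' => if j' == j then F else setT) mE.
rewrite (_ : \bigcap_(j' : 'I_B) _ = A j @^-1` F).
  move=> ->; congr (_ * _)%E.
  rewrite (bigD1 j) //= eqxx big1 ?mule1 // => j' /negbTE ->.
  by rewrite preimage_setT probability_setT.
apply/seteqP; split => w /=.
  by move/(_ j I); rewrite eqxx.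
by move=> h j' _; case: ifP => // /eqP ->.
Qed.

Section fixed_size.
Context {m : nat}.
Local Notation boxes := (@measurable_boxes _ X m).
Local Notation boxT := (g_sigma_algebraType boxes).

Definition subsample (g : 'I_m -> 'I_n) (w : T) : boxT := fun k => Z (g k) w.

Lemma measurable_subsample g : measurable_fun setT (subsample g).
Proof.
apply: (@measurability _ _ T boxT setT (subsample g) boxes erefl).
move=> _ [C [E [mE ->]] <-].
rewrite setTI (_ : _ @^-1` _ = \bigcap_(k in [set: 'I_m]) (Z (g k) @^-1` E k)).
  apply: fin_bigcap_measurable; first exact: finite_finset.
  by move=> k _; rewrite -[X in measurable X]setTI; exact: mZ.
apply/seteqP; split => w; rewrite /box /=.
  by move=> h k _; exact: h.
by move=> h k; exact: h k I.
Qed.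

Lemma measurable_subsample_preimage g C :
  <<s boxes>> C -> measurable (subsample g @^-1` C).
Proof. by move=> sC; rewrite -[X in measurable X]setTI; exact: measurable_subsample. Qed.

Definition spread (g : 'I_m -> 'I_n) (E : 'I_m -> set X) (i : 'I_n) : set X :=
  if [pick k | g k == i] is Some k then E k else setT.

Lemma spread_image g E k : injective g -> spread g E (g k) = E k.
Proof.
move=> g_inj; rewrite /spread; case: pickP => [k' /eqP /g_inj -> //| /(_ k)].
by rewrite eqxx.
Qed.

Lemma spread_out g E i : (forall k, g k != i) -> spread g E i = setT.
Proof.
by move=> gi; rewrite /spread; case: pickP => // k /eqP e; move: (gi k); rewrite e eqxx.
Qed.

Lemma measurable_spread g E i : (forall k, measurable (E k)) -> measurable (spread g E i).
Proof. by move=> mE; rewrite /spread; case: pickP. Qed.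

Lemma preimage_subsample_box g E : injective g ->
  subsample g @^-1` box E = \bigcap_i (Z i @^-1` spread g E i).
Proof.
move=> g_inj; apply/seteqP; split => w; rewrite /box /=.
- by move=> h i _; rewrite /spread; case: pickP => // k /eqP <-; exact: h.
- by move=> h k; move: (h (g k) I); rewrite /= spread_image.
Qed.

Lemma prod_spread g (E : 'I_m -> set X) : injective g ->
  (\prod_(i < n) P (Z i @^-1` spread g E i) = \prod_(k < m) P (Z (g k) @^-1` E k))%E.
Proof.
move=> g_inj.
rewrite (bigID (mem (g @: [set: _ ])%SET)) /= [X in (_ * X)%E]big1 ?mule1.
  transitivity (\prod_(i in (g @: [set: _ ])%SET) P (Z i @^-1` spread g E i))%E.
    by apply: eq_bigl.
  rewrite big_imset /=; last by move=> ? ? _ _; exact: g_inj.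
  by apply: eq_big => // k; rewrite ?inE //= spread_image.
move=> i gi; rewrite spread_out ?preimage_setT ?probability_setT //.
by move=> k; apply: contra gi => /eqP <-; rewrite imset_f.
Qed.

Lemma prod_preimage_ident g g' E : (forall k, measurable (E k)) ->
  (\prod_(k < m) P (Z (g k) @^-1` E k) = \prod_(k < m) P (Z (g' k) @^-1` E k))%E.
Proof. by move=> mE; apply: eq_bigr => k _; exact: Z_ident. Qed.

Lemma prob_subsample_box g E : injective g -> (forall k, measurable (E k)) ->
  P (subsample g @^-1` box E) = (\prod_(k < m) P (Z (g k) @^-1` E k))%E.
Proof.
move=> g_inj mE; rewrite preimage_subsample_box // prob_data ?prod_spread //.
by move=> i; exact: measurable_spread.
Qed.

Lemma prob_pair_subsamples_box g1 g2 E1 E2 F j :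
  injective g1 -> injective g2 -> (forall k k', g1 k != g2 k') ->
  (forall k, measurable (E1 k)) -> (forall k, measurable (E2 k)) ->
  P (A j @^-1` F `&` subsample g1 @^-1` box E1 `&` subsample g2 @^-1` box E2) =
  (P (A j @^-1` F) * \prod_(k < m) P (Z (g1 k) @^-1` E1 k)
                   * \prod_(k < m) P (Z (g2 k) @^-1` E2 k))%E.
Proof.
move=> g1_inj g2_inj g12 mE1 mE2.
rewrite !preimage_subsample_box // (_ : _ `&` _ =
    \bigcap_i (Z i @^-1` (spread g1 E1 i `&` spread g2 E2 i)) `&` A j @^-1` F).
  rewrite prob_data_pair; last by move=> i; apply: measurableI; exact: measurable_spread.
  rewrite (eq_bigr (fun i => P (Z i @^-1` spread g1 E1 i) * P (Z i @^-1` spread g2 E2 i))%E).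
    by rewrite big_split /= !prod_spread // muleC muleA.
  move=> i _; have [[k <-]|g1i] := pselect (exists k, g1 k = i).
    rewrite (@spread_out g2 E2); last by move=> k'; rewrite eq_sym.
    by rewrite setIT preimage_setT probability_setT mule1.
  rewrite (@spread_out g1 E1); last by move=> k; apply/eqP => e; apply: g1i; exists k.
  by rewrite setTI preimage_setT probability_setT mul1e.
apply/seteqP; split => w /=.
  by move=> [[Fw h1] h2]; split => // i _; split; [exact: h1|exact: h2].
by move=> [h Fw]; split; [split => // i _|move=> i _]; case: (h i I).
Qed.

Lemma prob_pair_subsamples_half_box g0 g1 g2 E2 F j C :
  injective g0 -> injective g1 -> injective g2 -> (forall k k', g1 k != g2 k') ->
  (forall k, measurable (E2 k)) -> <<s boxes>> C ->
  P (subsample g1 @^-1` C `&` (A j @^-1` F `&` subsample g2 @^-1` box E2)) =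
  (P (A j @^-1` F) * P (subsample g0 @^-1` box E2) * P (subsample g0 @^-1` C))%E.
Proof.
move=> g0_inj g1_inj g2_inj g12 mE2 sC.
have mbox g : measurable (subsample g @^-1` box E2).
  by apply: measurable_subsample_preimage; apply: sub_sigma_algebra; exists E2.
have mAF := measurable_pair_preimage j F.
apply: (preimage_setI_scale_sigma (measurable_subsample g1) (measurable_subsample g0)
  (measurableI _ _ mAF (mbox g2)) (@setI_closed_boxes _ X m) (@measurable_boxes_setT _ X m))
  => //; [exact: mule_ge0 | by rewrite fin_numM // fin_num_measure |].
move=> _ [E1 [mE1 ->]].
rewrite (_ : _ `&` _ = A j @^-1` F `&` subsample g1 @^-1` box E1
                      `&` subsample g2 @^-1` box E2); last first.
  by apply/seteqP; split => w /=; tauto.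
rewrite prob_pair_subsamples_box // !prob_subsample_box //.
rewrite (prod_preimage_ident g1 g0) // (prod_preimage_ident g2 g0) //.
by rewrite -!muleA [X in (_ * X)%E]muleC.
Qed.

Lemma prob_pair_subsamples g0 g1 g2 F j C1 C2 :
  injective g0 -> injective g1 -> injective g2 -> (forall k k', g1 k != g2 k') ->
  <<s boxes>> C1 -> <<s boxes>> C2 ->
  P (A j @^-1` F `&` subsample g1 @^-1` C1 `&` subsample g2 @^-1` C2) =
  (P (A j @^-1` F) * P (subsample g0 @^-1` C1) * P (subsample g0 @^-1` C2))%E.
Proof.
move=> g0_inj g1_inj g2_inj g12 sC1 sC2.
have mC1 g : measurable (subsample g @^-1` C1) by exact: measurable_subsample_preimage.
have mAF := measurable_pair_preimage j F.
rewrite setIC; apply: (preimage_setI_scale_sigma (measurable_subsample g2)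
  (measurable_subsample g0) (measurableI _ _ mAF (mC1 g1)) (@setI_closed_boxes _ X m)
  (@measurable_boxes_setT _ X m)) => //;
  [exact: mule_ge0 | by rewrite fin_numM // fin_num_measure |].
move=> _ [E2 [mE2 ->]].
rewrite (_ : _ `&` _ = subsample g1 @^-1` C1 `&`
                       (A j @^-1` F `&` subsample g2 @^-1` box E2)); last first.
  by apply/seteqP; split => w /=; tauto.
rewrite (prob_pair_subsamples_half_box g0) //.
by rewrite -!muleA [X in (_ * X)%E]muleC.
Qed.

Definition enum_nth (a : {set 'I_n}) (k : 'I_m) : 'I_n := nth (Ordinal n0) (enum a) k.

Lemma enum_nth_inj (a : {set 'I_n}) : #|a| = m -> injective (enum_nth a).
Proof.
move=> am k k'; rewrite /enum_nth => /eqP.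
by rewrite nth_uniq ?enum_uniq -?cardE ?am // => /eqP/val_inj.
Qed.

Lemma enum_nth_mem (a : {set 'I_n}) k : #|a| = m -> enum_nth a k \in a.
Proof. by move=> am; rewrite -mem_enum /enum_nth mem_nth // -cardE am. Qed.

Lemma enum_nth_disjoint (a1 a2 : {set 'I_n}) : #|a1| = m -> #|a2| = m -> [disjoint a1 & a2]%B ->
  forall k k', enum_nth a1 k != enum_nth a2 k'.
Proof.
move=> a1m a2m a12 k k'; apply/eqP => e.
by move: (disjointFr a12 (enum_nth_mem a1 k a1m)); rewrite e enum_nth_mem.
Qed.

Lemma sel_sub_subsample p (S : forall m : nat, ('I_m -> X) -> {set 'I_p}) (a : {set 'I_n}) w :
  #|a| = m -> sel_sub S Z a w = S m (subsample (enum_nth a) w).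
Proof.
move=> am; rewrite /sel_sub /subsample /enum_nth.
have -> : (fun k => Z (enum_val k) w) =
    (fun k : 'I_#|a| => (fun i : nat => Z (nth (Ordinal n0) (enum a) i) w) k).
  by apply/funext => k; rewrite (enum_val_nth (Ordinal n0)).
by rewrite am.
Qed.

Hypothesis pairs_m : forall j w,
  #|(A j w).1| = m /\ #|(A j w).2| = m /\ [disjoint (A j w).1 & (A j w).2]%B.

Lemma both_halves_bigcup j (b : ('I_m -> X) -> bool) :
  [set w | b (subsample (enum_nth (A j w).1) w) && b (subsample (enum_nth (A j w).2) w)] =
  \bigcup_(a in [set: {set 'I_n} * {set 'I_n}]) (A j @^-1` [set a]
     `&` subsample (enum_nth a.1) @^-1` [set x | b x]
     `&` subsample (enum_nth a.2) @^-1` [set x | b x]).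
Proof.
apply/seteqP; split => w /=.
  by move=> /andP[h1 h2]; exists (A j w).
by move=> [a _ [[/= -> h1] h2]]; apply/andP.
Qed.

Lemma measurable_pair_halves j a (b : ('I_m -> X) -> bool) :
  <<s boxes>> [set x | b x] ->
  measurable (A j @^-1` [set a] `&` subsample (enum_nth a.1) @^-1` [set x | b x]
              `&` subsample (enum_nth a.2) @^-1` [set x | b x]).
Proof.
move=> sb; apply: measurableI; first apply: measurableI.
- exact: mA.
- exact: measurable_subsample_preimage.
- exact: measurable_subsample_preimage.
Qed.

Lemma measurable_both_halves j (b : ('I_m -> X) -> bool) :
  <<s boxes>> [set x | b x] ->
  measurable [set w | b (subsample (enum_nth (A j w).1) w)
                      && b (subsample (enum_nth (A j w).2) w)].
Proof.
move=> sb; rewrite both_halves_bigcup; apply: fin_bigcup_measurable => [|a _].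
  exact: finite_finset.
exact: measurable_pair_halves.
Qed.

Lemma prob_both_halves g0 j (b : ('I_m -> X) -> bool) : injective g0 ->
  <<s boxes>> [set x | b x] ->
  P [set w | b (subsample (enum_nth (A j w).1) w) && b (subsample (enum_nth (A j w).2) w)]
  = (P (subsample g0 @^-1` [set x | b x]) * P (subsample g0 @^-1` [set x | b x]))%E.
Proof.
move=> g0_inj sb; set q := P (subsample g0 @^-1` _).
rewrite both_halves_bigcup measure_fin_bigcup //; last 3 first.
- exact: finite_finset.
- by move=> a a' _ _ [w [[[/= <- _] _] [[/= <- _] _]]].
- by move=> a _; exact: measurable_pair_halves.
rewrite (eq_fsbigr (fun a => P (A j @^-1` [set a]) * (q * q)))%E; last first.
  move=> a _; have [[w0 <-]|Aa] := pselect (exists w, A j w = a).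
    have [a1m [a2m a12]] := pairs_m j w0.
    rewrite muleA; apply: prob_pair_subsamples => //.
    - exact: enum_nth_inj.
    - exact: enum_nth_inj.
    - exact: enum_nth_disjoint.
  have -> : A j @^-1` [set a] = set0.
    by apply/seteqP; split => w //= Aw; apply: Aa; exists w.
  by rewrite !set0I !measure0 mul0e.
rewrite fsbig_finite /=; last exact: finite_finset.
rewrite -ge0_sume_distrl; last by move=> a _; exact: measure_ge0.
rewrite -fsbig_finite; last exact: finite_finset.
rewrite -measure_fin_bigcup //.
- rewrite (_ : \bigcup_(a in _) _ = setT); last first.
    by apply/seteqP; split => w // _; exists (A j w).
  by rewrite -[RHS]mul1e; congr (_ * _)%E; exact: probability_setT.
- exact: finite_finset.
- by move=> a a' _ _ [w [/= <- <-]].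
Qed.

End fixed_size.

Variables (p : nat) (S : forall m : nat, ('I_m -> X) -> {set 'I_p}).
Hypotheses (S_meas : measurable_selection S) (B0 : (0 < B)%N) (pairs_valid : valid_pairs A).
Local Notation boxes m := (@measurable_boxes _ X m).

Definition first_half : 'I_n./2 -> 'I_n := widen_ord (half_leq_self n).

Lemma first_half_inj : injective first_half.
Proof. by move=> k k' e; apply/val_inj; exact: (congr1 val e). Qed.

Lemma boxes_selected m k : <<s boxes m>> [set x | k \in S m x].
Proof. exact: cylinders_sub_boxes (S_meas m k). Qed.

Lemma boxes_unselected m k : <<s boxes m>> [set x | k \notin S m x].
Proof.
rewrite (_ : [set x | _] = ~` [set x | k \in S m x]).
  exact: sigma_algebraC (boxes_selected m k).
by apply/seteqP; split => x /= /negP.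
Qed.

Lemma sel_pair_subsample (q : pred {set 'I_p}) j :
  [set w | q (sel_sub S Z (A j w).1 w) && q (sel_sub S Z (A j w).2 w)] =
  [set w | q (S n./2 (subsample (enum_nth (A j w).1) w))
           && q (S n./2 (subsample (enum_nth (A j w).2) w))].
Proof.
apply/seteqP; split => w /=; have [a1 [a2 _]] := pairs_valid j w;
  by rewrite (sel_sub_subsample _ _ _ _ a1) (sel_sub_subsample _ _ _ _ a2).
Qed.

Lemma measurable_sel_half (q : pred {set 'I_p}) :
  <<s boxes n./2>> [set x | q (S n./2 x)] -> measurable [set w | q (sel_half S Z w)].
Proof. exact: (measurable_subsample_preimage first_half). Qed.

Lemma measurable_sel_pair (q : pred {set 'I_p}) j :
  <<s boxes n./2>> [set x | q (S n./2 x)] ->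
  measurable [set w | q (sel_sub S Z (A j w).1 w) && q (sel_sub S Z (A j w).2 w)].
Proof.
move=> sq; rewrite sel_pair_subsample.
exact: (measurable_both_halves j (fun x => q (S n./2 x)) sq).
Qed.

Lemma prob_sel_pair (q : pred {set 'I_p}) j :
  <<s boxes n./2>> [set x | q (S n./2 x)] ->
  P [set w | q (sel_sub S Z (A j w).1 w) && q (sel_sub S Z (A j w).2 w)] =
  (P [set w | q (sel_half S Z w)] * P [set w | q (sel_half S Z w)])%E.
Proof.
move=> sq; rewrite sel_pair_subsample.
exact: (prob_both_halves pairs_valid first_half j (fun x => q (S n./2 x)) first_half_inj sq).
Qed.

Lemma cpss_bound_low (theta tau : R) : 1/2 < tau ->
  (\int[P]_w (#|S_CPSS S Z A tau w :&: L_set P S Z theta|%:R)%:E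
    <= (theta / (2 * tau - 1))%:E *
       \int[P]_w (#|sel_half S Z w :&: L_set P S Z theta|%:R)%:E)%E.
Proof.
move=> tau_gt; pose sel k := [set w | k \in sel_half S Z w].
have msel k : measurable (sel k).
  by apply: (measurable_sel_half (fun s => k \in s)); exact: boxes_selected.
have selE k : P (sel k) = (fine (P (sel k)))%:E by rewrite fineK // fin_num_measure.
apply: (expectation_pair_vote_bound P _ _ _ _ _
  (fun j k w => k \in sel_sub S Z (A j w).1 w)
  (fun j k w => k \in sel_sub S Z (A j w).2 w) (fun k => fine (P (sel k)))) => //.
- by move=> k w; rewrite inE.
- move=> j k; apply: (measurable_sel_pair (fun s => k \in s)).
  exact: boxes_selected.
- move=> j k; have /= -> := prob_sel_pair (fun s => k \in s) j (boxes_selected _ k).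
  by rewrite -/(sel k) selE -EFinM expr2.
- move=> k; rewrite inE => k_low; rewrite fine_ge0 ?measure_ge0 //=.
  by rewrite -lee_fin -selE.
Qed.

Lemma cpss_bound_high (theta tau : R) : tau < 1/2 ->
  (\int[P]_w (#|~: S_CPSS S Z A tau w :&: H_set P S Z theta|%:R)%:E
    <= ((1 - theta) / (1 - 2 * tau))%:E *
       \int[P]_w (#|~: sel_half S Z w :&: H_set P S Z theta|%:R)%:E)%E.
Proof.
move=> tau_lt; pose sel k := [set w | k \in sel_half S Z w].
have msel k : measurable (sel k).
  by apply: (measurable_sel_half (fun s => k \in s)); exact: boxes_selected.
have notin_half_setC (k : 'I_p) : [set w | k \notin sel_half S Z w] = ~` sel k.
  by apply/seteqP; split => w; rewrite /sel /= => /negP.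
have prob_notin_half (k : 'I_p) : P [set w | k \notin sel_half S Z w] = (1 - fine (P (sel k)))%:E.
  by rewrite notin_half_setC probability_setC // EFinB fineK // fin_num_measure.
have in_setC_half (k : 'I_p) :
    [set w | k \in ~: sel_half S Z w] = [set w | k \notin sel_half S Z w].
  by apply/seteqP; split => w; rewrite /= inE.
rewrite (_ : 1 - 2 * tau = 2 * (1 - tau) - 1); last by ring.
apply: (expectation_pair_vote_bound P _ _ _ (fun w => ~: S_CPSS S Z A tau w)
  (fun w => ~: sel_half S Z w)
  (fun j k w => k \notin sel_sub S Z (A j w).1 w)
  (fun j k w => k \notin sel_sub S Z (A j w).2 w) (fun k => 1 - fine (P (sel k)))) => //.
- by lra.
- move=> k w; rewrite !inE -ltNge /Pi_hat mean_votes_negb //; lra.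
- move=> j k; apply: (measurable_sel_pair (fun s => k \notin s)).
  exact: boxes_unselected.
- move=> j k; have /= -> := prob_sel_pair (fun s => k \notin s) j (boxes_unselected _ k).
  by rewrite expr2 EFinM -prob_notin_half.
- by move=> k; rewrite in_setC_half notin_half_setC; exact: measurableC.
- by move=> k; rewrite -prob_notin_half -in_setC_half.
- move=> k; rewrite inE => k_high; have p1 : (fine (P (sel k)) <= 1).
    by rewrite -lee_fin fineK ?fin_num_measure // probability_le1.
  have : theta < fine (P (sel k)).
    by rewrite -lte_fin fineK // fin_num_measure.
  by lra.
Qed.

End complementary_pairs.

Theorem theorem1 (R : realType) (d d' : measure_display)
    (T : measurableType d') (X : measurableType d) (P : probability T R)
    (n p B : nat) (Z : 'I_n -> T -> X)
    (S : forall m : nat, ('I_m -> X) -> {set 'I_p})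
    (A : 'I_B -> T -> {set 'I_n} * {set 'I_n}) (theta : R) :
  (2 <= n)%N -> (1 <= p)%N -> (1 <= B)%N -> 0 <= theta <= 1 ->
  measurable_selection S -> iid_and_indep P Z A -> valid_pairs A ->
  (forall tau : R, 1/2 < tau <= 1 ->
     (\int[P]_w (#|S_CPSS S Z A tau w :&: L_set P S Z theta|%:R)%:E
      <= (theta / (2 * tau - 1))%:E *
         \int[P]_w (#|sel_half S Z w :&: L_set P S Z theta|%:R)%:E)%E) /\
  (forall tau : R, 0 <= tau < 1/2 ->
     (\int[P]_w (#|~: S_CPSS S Z A tau w :&: H_set P S Z theta|%:R)%:E
      <= ((1 - theta) / (1 - 2 * tau))%:E *
         \int[P]_w (#|~: sel_half S Z w :&: H_set P S Z theta|%:R)%:E)%E).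
Proof.
move=> n2 _ B1 _ S_meas [mZ [mA [Z_ident ZA_indep]]] pairs_valid.
have n0 : (0 < n)%N by apply: leq_trans n2.
split => tau.
- by move=> /andP[tau_gt _]; apply: cpss_bound_low.
- by move=> /andP[_ tau_lt]; apply: cpss_bound_high.
Qed.
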